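(* Let $(\theta,\varphi,m\colon C_2\to C_1)$ be an involutive-2-link in a category $\mathcal{C}$. Then $(\theta,\varphi,m)$ arises from an internal groupoid (i.e., there is an internal groupoid $(C_0,C_1,C_2,d,c,e,m,\pi_1,\pi_2,i)$ with this same $m$ such that $\theta=\langle i\pi_1,m\rangle$ and $\varphi=\langle m,i\pi_2\rangle$) if and only if all of the following hold: (1) the pairs $(m,m\theta)$ and $(m,m\varphi)$ are each jointly monomorphic; (2) there exist morphisms $e_1,e_2\colon C_1\to C_2$ such that $me_1=1_{C_1}=me_2$; $\theta e_2=e_2$ and $\varphi e_1=e_1$; $m\theta\varphi e_2=m\varphi\theta e_1$; $m\theta e_1 m\varphi=m\varphi e_2 m\theta$; $m\theta e_1 m=m\theta e_1 m\theta$ and $m\varphi e_2 m=m\varphi e_2 m\varphi$; (3) writing $\pi_1=m\varphi$ and $\pi_2=m\theta$, the pair $(\pi_1,\pi_2)$ is bi-exact, i.e. there exist an object $C_0$ and morphisms $d,c\colon C_1\to C_0$ with $d\pi_1=c\pi_2$ such that this square is both a pullback and a pushout, and there exist an object $C_3$ and morphisms $p_1,p_2\colon C_3\to C_2$ with $\pi_2p_1=\pi_1p_2$ such that this square is both a pullback and a pushout; (4) there exist morphisms $m_1,m_2\colon C_3\to C_2$ with $\pi_1m_1=mp_1$, $\pi_2m_1=\pi_2p_2$, $\pi_1m_2=\pi_1p_1$, $\pi_2m_2=mp_2$ (these are unique since $(\pi_1,\pi_2)$ is jointly monomorphic), and they satisfy $mm_1=mm_2$.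
   Context: No limits or colimits are assumed to exist in $\mathcal{C}$; pullbacks and pushouts are properties of commutative squares. A pair of morphisms with common domain is jointly monomorphic if any two morphisms into that domain agreeing after composition with each of them are equal. Notation: for $x,y\colon X\to C_1$ with $dx=cy$, $\langle x,y\rangle\colon X\to C_2$ is the unique morphism with $\pi_1\langle x,y\rangle=x$, $\pi_2\langle x,y\rangle=y$. Internal groupoid in a category $\mathcal{C}$: objects $C_0,C_1,C_2$ and morphisms $d,c\colon C_1\to C_0$, $e\colon C_0\to C_1$, $m,\pi_1,\pi_2\colon C_2\to C_1$, $i\colon C_1\to C_1$ such that: $de=1_{C_0}=ce$; $dm=d\pi_2$, $cm=c\pi_1$, $d\pi_1=c\pi_2$; $di=c$, $ci=d$, $i^2=1_{C_1}$, $ie=e$; the commutative square $d\pi_1=c\pi_2$ is a pullback square; $m\langle 1_{C_1},ed\rangle=1_{C_1}=m\langle ec,1_{C_1}\rangle$; $m\langle 1_{C_1},i\rangle=ec$ and $m\langle i,1_{C_1}\rangle=ed$; the cospan $d\pi_2\colon C_2\to C_0$, $c\colon C_1\to C_0$ can be completed to a pullback square $d\pi_2 p_1=c\,p_2$ with $p_1\colon C_3\to C_2$, $p_2\colon C_3\to C_1$; and $m(1\times m)=m(m\times 1)$, where $m\times 1=\langle mp_1,p_2\rangle$ and $1\times m=\langle \pi_1p_1, m\langle\pi_2p_1,p_2\rangle\rangle$. Involutive-2-link: a triple $(\theta,\varphi,m)$ where $m\colon A\to B$ is a morphism and $\theta,\varphi\colon A\to A$ satisfy $\theta^2=\varphi^2=1_A$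 and $\theta\varphi\theta=\varphi\theta\varphi$, and such that $m,m\theta,m\varphi\colon A\to B$ are jointly monomorphic. *)

Set Implicit Arguments.
Unset Strict Implicit.

Record Category := {
  Ob :> Type;
  Hom : Ob -> Ob -> Type;
  idm : forall A, Hom A A;
  comp : forall A B C, Hom B C -> Hom A B -> Hom A C;
  comp_assoc : forall A B C D (h : Hom C D) (g : Hom B C) (f : Hom A B),
      comp h (comp g f) = comp (comp h g) f;
  comp_id_l : forall A B (f : Hom A B), comp (idm B) f = f;
  comp_id_r : forall A B (f : Hom A B), comp f (idm A) = f
}.

Arguments Hom {c} _ _.
Arguments idm {c} _.
Arguments comp {c A B C} _ _.

Notation "g ∘ f" := (comp g f) (at level 40, left associativity).

Section Notions.
Context {C : Category}.

Definition is_pullback {P X Y Z : C}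
  (a : Hom P X) (b : Hom P Y) (f : Hom X Z) (g : Hom Y Z) : Prop :=
  f ∘ a = g ∘ b /\
  forall (W : C) (x : Hom W X) (y : Hom W Y), f ∘ x = g ∘ y ->
    exists u : Hom W P, (a ∘ u = x /\ b ∘ u = y) /\
      forall u' : Hom W P, a ∘ u' = x -> b ∘ u' = y -> u' = u.

Definition is_pushout {P X Y Z : C}
  (a : Hom P X) (b : Hom P Y) (f : Hom X Z) (g : Hom Y Z) : Prop :=
  f ∘ a = g ∘ b /\
  forall (W : C) (x : Hom X W) (y : Hom Y W), x ∘ a = y ∘ b ->
    exists u : Hom Z W, (u ∘ f = x /\ u ∘ g = y) /\
      forall u' : Hom Z W, u' ∘ f = x -> u' ∘ g = y -> u' = u.

Definition jointly_mono2 {A B B' : C} (f : Hom A B) (g : Hom A B') : Prop :=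
  forall (W : C) (x y : Hom W A), f ∘ x = f ∘ y -> g ∘ x = g ∘ y -> x = y.

Definition jointly_mono3 {A B1 B2 B3 : C}
  (f : Hom A B1) (g : Hom A B2) (h : Hom A B3) : Prop :=
  forall (W : C) (x y : Hom W A),
    f ∘ x = f ∘ y -> g ∘ x = g ∘ y -> h ∘ x = h ∘ y -> x = y.

Definition involutive_2_link {A B : C}
  (theta phi : Hom A A) (m : Hom A B) : Prop :=
  theta ∘ theta = idm A /\ phi ∘ phi = idm A /\
  theta ∘ phi ∘ theta = phi ∘ theta ∘ phi /\
  jointly_mono3 m (m ∘ theta) (m ∘ phi).

(* Since the square
   d pi1 = c pi2 is required to be a pullback, the pairing <x,y> : X -> C2 is
   the unique morphism with pi1 <x,y> = x, pi2 <x,y> = y; each axiom of the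
   form "m <x,y> = z" is stated as "every u with pi1 u = x, pi2 u = y
   satisfies m u = z" (such u exists and is unique by the pullback). *)
Definition is_internal_groupoid {C0 C1 C2 : C}
  (d c : Hom C1 C0) (e : Hom C0 C1) (m pi1 pi2 : Hom C2 C1) (i : Hom C1 C1)
  : Prop :=
  d ∘ e = idm C0 /\ c ∘ e = idm C0 /\
  d ∘ m = d ∘ pi2 /\ c ∘ m = c ∘ pi1 /\ d ∘ pi1 = c ∘ pi2 /\
  d ∘ i = c /\ c ∘ i = d /\ i ∘ i = idm C1 /\ i ∘ e = e /\
  is_pullback pi1 pi2 d c /\
  (forall u : Hom C1 C2, pi1 ∘ u = idm C1 -> pi2 ∘ u = e ∘ d -> m ∘ u = idm C1) /\
  (forall u : Hom C1 C2, pi1 ∘ u = e ∘ c -> pi2 ∘ u = idm C1 -> m ∘ u = idm C1) /\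
  (forall u : Hom C1 C2, pi1 ∘ u = idm C1 -> pi2 ∘ u = i -> m ∘ u = e ∘ c) /\
  (forall u : Hom C1 C2, pi1 ∘ u = i -> pi2 ∘ u = idm C1 -> m ∘ u = e ∘ d) /\
  (* the cospan d pi2, c completes to a pullback d pi2 p1 = c p2, and
     m (1 x m) = m (m x 1) *)
  exists (C3 : C) (p1 : Hom C3 C2) (p2 : Hom C3 C1),
    is_pullback p1 p2 (d ∘ pi2) c /\
    forall (mx1 b onexm : Hom C3 C2),
      pi1 ∘ mx1 = m ∘ p1 -> pi2 ∘ mx1 = p2 ->
      (* b = <pi2 p1, p2> *)
      pi1 ∘ b = pi2 ∘ p1 -> pi2 ∘ b = p2 ->
      (* onexm = 1 x m = <pi1 p1, m b> *)
      pi1 ∘ onexm = pi1 ∘ p1 -> pi2 ∘ onexm = m ∘ b ->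
      m ∘ onexm = m ∘ mx1.

Definition arises_from_internal_groupoid {C1 C2 : C}
  (theta phi : Hom C2 C2) (m : Hom C2 C1) : Prop :=
  exists (C0 : C) (d c : Hom C1 C0) (e : Hom C0 C1) (pi1 pi2 : Hom C2 C1)
         (i : Hom C1 C1),
    is_internal_groupoid d c e m pi1 pi2 i /\
    (pi1 ∘ theta = i ∘ pi1 /\ pi2 ∘ theta = m) /\
    (pi1 ∘ phi = m /\ pi2 ∘ phi = i ∘ pi2).

End Notions.


(* If the link comes from a groupoid then [m phi = pi1] and [m theta = pi2]
   because [theta], [phi] are involutions; the units give sections
   [e1 = <1, e d>] and [e2 = <e c, 1>] of [pi1], [pi2], and both kernel-pair
   squares are pullbacks of split epimorphisms, hence pushouts.
   Conversely the pushout property of [d pi1 = c pi2] yields the unit [e] with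
   [e d = pi2 e1], [e c = pi1 e2]; the idempotency conditions make [d e] and
   [c e] identities, and [i := pi1 theta e1] is the inverse.  Finally [theta]
   is recovered from [pi1 theta = i pi1], [pi2 theta = m] via the joint
   monicity of (m, pi2), after computing [m <i pi1, m> = pi2] by associativity
   applied to the composable triple (f^-1, f, g). *)

(* Each section registers its equations in the database [link], every one also
   in the form [f ∘ (g ∘ x) = k ∘ x] so that it applies inside right-nested
   composites. *)
Hint Rewrite <- @comp_assoc : comp.
Hint Rewrite @comp_id_l @comp_id_r : comp.

Tactic Notation "comp_simpl" := autorewrite with comp link.
Tactic Notation "comp_simpl" "in" hyp(H) := autorewrite with comp link in H.

Section Squares.
Context {C : Category}.

Lemma comp_rw {B D E : C} {f : Hom D E} {g : Hom B D} {k : Hom B E} :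
  f ∘ g = k -> forall X (x : Hom X B), f ∘ (g ∘ x) = k ∘ x.
Proof. intros fg X x. rewrite comp_assoc, fg. reflexivity. Qed.

Lemma comp_rw3 {B B' D E : C} {f : Hom D E} {g : Hom B' D} {h : Hom B B'} {k : Hom B E} :
  f ∘ (g ∘ h) = k -> forall X (x : Hom X B), f ∘ (g ∘ (h ∘ x)) = k ∘ x.
Proof. intros fgh X x. rewrite (comp_assoc g), comp_assoc, fgh. reflexivity. Qed.

Lemma eq_comp_r {B D : C} {f g : Hom B D} :
  f = g -> forall X (x : Hom X B), f ∘ x = g ∘ x.
Proof. intros <- X x. reflexivity. Qed.

Lemma split_mono_cancel {A B : C} {r : Hom B A} {s : Hom A B} :
  r ∘ s = idm A -> forall X (x y : Hom X A), s ∘ x = s ∘ y -> x = y.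
Proof.
  intros rs X x y sxy. rewrite <- (comp_id_l x), <- (comp_id_l y), <- rs,
    <- !comp_assoc, sxy. reflexivity.
Qed.

Context {P X Y Z : C} {a : Hom P X} {b : Hom P Y} {f : Hom X Z} {g : Hom Y Z}.

Lemma pullback_lift : is_pullback a b f g ->
  forall W (x : Hom W X) (y : Hom W Y), f ∘ x = g ∘ y ->
  exists u, a ∘ u = x /\ b ∘ u = y.
Proof. intros [_ pb] W x y fxgy. destruct (pb W x y fxgy) as [u [ab _]]. eauto. Qed.

Lemma pullback_jointly_mono : is_pullback a b f g -> jointly_mono2 a b.
Proof.
  intros [sq pb] W u v au bu.
  destruct (pb W (a ∘ u) (b ∘ u)) as [w [_ uniq]].
  { rewrite !comp_assoc, sq. reflexivity. }
  rewrite (uniq u eq_refl eq_refl), (uniq v (eq_sym au) (eq_sym bu)). reflexivity.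
Qed.

Lemma pushout_desc : is_pushout a b f g ->
  forall W (x : Hom X W) (y : Hom Y W), x ∘ a = y ∘ b ->
  exists u, u ∘ f = x /\ u ∘ g = y.
Proof. intros [_ po] W x y xayb. destruct (po W x y xayb) as [u [fg _]]. eauto. Qed.

Lemma pushout_jointly_epi : is_pushout a b f g ->
  forall W (u v : Hom Z W), u ∘ f = v ∘ f -> u ∘ g = v ∘ g -> u = v.
Proof.
  intros [sq po] W u v uf ug.
  destruct (po W (u ∘ f) (u ∘ g)) as [w [_ uniq]].
  { rewrite <- !comp_assoc, sq. reflexivity. }
  rewrite (uniq u eq_refl eq_refl), (uniq v (eq_sym uf) (eq_sym ug)). reflexivity.
Qed.

(* With sections [s], [t] of [f], [g], the pairs (1, t f), (s f, t f) and
   (s g, 1) factor through the pullback, which forces [x = y t f] and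
   [x s f = y t f] and [x s g = y]; hence [x s] is the mediating map. *)
Lemma pullback_of_split_epis_is_pushout (s : Hom Z X) (t : Hom Z Y) :
  f ∘ s = idm Z -> g ∘ t = idm Z ->
  is_pullback a b f g -> is_pushout a b f g.
Proof.
  intros fs gt pb. split; [exact (proj1 pb)|].
  intros W x y xayb.
  assert (through : forall V (w : Hom V P) x' y', a ∘ w = x' -> b ∘ w = y' ->
            x ∘ x' = y ∘ y').
  { intros V w x' y' <- <-. rewrite !comp_assoc, xayb. reflexivity. }
  destruct (pullback_lift pb X (idm X) (t ∘ f)) as [w1 [w1a w1b]].
  { rewrite comp_id_r, comp_assoc, gt, comp_id_l. reflexivity. }
  destruct (pullback_lift pb X (s ∘ f) (t ∘ f)) as [w2 [w2a w2b]].
  { rewrite !comp_assoc, fs, gt. reflexivity. }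
  destruct (pullback_lift pb Y (s ∘ g) (idm Y)) as [w3 [w3a w3b]].
  { rewrite comp_id_r, comp_assoc, fs, comp_id_l. reflexivity. }
  pose proof (through _ _ _ _ w1a w1b) as x_eq. rewrite comp_id_r in x_eq.
  pose proof (through _ _ _ _ w2a w2b) as xsf.
  pose proof (through _ _ _ _ w3a w3b) as xsg. rewrite comp_id_r in xsg.
  exists (x ∘ s). split; [split|].
  - rewrite <- comp_assoc, xsf, x_eq. reflexivity.
  - rewrite <- comp_assoc. exact xsg.
  - intros u' <- _. rewrite <- comp_assoc, fs, comp_id_r. reflexivity.
Qed.

Lemma pullback_pasting {Q X' : C} (a' : Hom Q X') (b' : Hom Q P) (f' : Hom X' X) :
  is_pullback a b f g -> f' ∘ a' = a ∘ b' ->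
  (is_pullback a' b' f' a <-> is_pullback a' (b ∘ b') (f ∘ f') g).
Proof.
  intros pb left_sq.
  pose proof (pullback_jointly_mono pb) as ab_mono.
  assert (a_b'_eq : forall W (u : Hom W Q), a ∘ (b' ∘ u) = f' ∘ (a' ∘ u)).
  { intros W u. rewrite !comp_assoc, left_sq. reflexivity. }
  split; intros [_ pb']; split.
  - rewrite <- comp_assoc, left_sq, !comp_assoc, (proj1 pb). reflexivity.
  - intros W x y sq.
    destruct (pullback_lift pb W (f' ∘ x) y) as [z [az bz]].
    { rewrite comp_assoc. exact sq. }
    destruct (pb' W x z) as [u [[a'u b'u] uniq]]; [symmetry; exact az|].
    exists u. split; [split|].
    + exact a'u.
    + rewrite <- comp_assoc, b'u. exact bz.
    + intros u' a'u' bb'u'. apply uniq; [exact a'u'|].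
      apply ab_mono.
      * rewrite a_b'_eq, a'u', az. reflexivity.
      * rewrite comp_assoc, bb'u', bz. reflexivity.
  - exact left_sq.
  - intros W x y sq.
    destruct (pb' W x (b ∘ y)) as [u [[a'u bb'u] uniq]].
    { rewrite <- comp_assoc, sq, !comp_assoc, (proj1 pb). reflexivity. }
    assert (b'u : b' ∘ u = y).
    { apply ab_mono.
      - rewrite a_b'_eq, a'u. exact sq.
      - rewrite comp_assoc. exact bb'u. }
    exists u. split; [split; assumption|].
    intros u' a'u' b'u'. apply uniq; [exact a'u'|].
    rewrite <- comp_assoc, b'u'. reflexivity.
Qed.
End Squares.

Section Conditions.
Context {C : Category} {C1 C2 : C}.

Definition link_jointly_mono (theta phi : Hom C2 C2) (m : Hom C2 C1) : Prop :=
  jointly_mono2 m (m ∘ theta) /\ jointly_mono2 m (m ∘ phi).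

Definition link_units (theta phi : Hom C2 C2) (m : Hom C2 C1) : Prop :=
  exists e1 e2 : Hom C1 C2,
    m ∘ e1 = idm C1 /\ m ∘ e2 = idm C1 /\
    theta ∘ e2 = e2 /\ phi ∘ e1 = e1 /\
    m ∘ theta ∘ phi ∘ e2 = m ∘ phi ∘ theta ∘ e1 /\
    m ∘ theta ∘ e1 ∘ m ∘ phi = m ∘ phi ∘ e2 ∘ m ∘ theta /\
    m ∘ theta ∘ e1 ∘ m = m ∘ theta ∘ e1 ∘ m ∘ theta /\
    m ∘ phi ∘ e2 ∘ m = m ∘ phi ∘ e2 ∘ m ∘ phi.

Definition bicartesian_span {X Y : C} (f : Hom C2 X) (g : Hom C2 Y) : Prop :=
  exists (W : C) (h : Hom X W) (k : Hom Y W), is_pullback f g h k /\ is_pushout f g h k.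

Definition link_composition (theta phi : Hom C2 C2) (m : Hom C2 C1) : Prop :=
  exists (C3 : C) (p1 p2 : Hom C3 C2),
    is_pullback p1 p2 (m ∘ theta) (m ∘ phi) /\
    is_pushout p1 p2 (m ∘ theta) (m ∘ phi) /\
    exists m1 m2 : Hom C3 C2,
      m ∘ phi ∘ m1 = m ∘ p1 /\ m ∘ theta ∘ m1 = m ∘ theta ∘ p2 /\
      m ∘ phi ∘ m2 = m ∘ phi ∘ p1 /\ m ∘ theta ∘ m2 = m ∘ p2 /\
      m ∘ m1 = m ∘ m2.

Definition groupoid_link_conditions (theta phi : Hom C2 C2) (m : Hom C2 C1) : Prop :=
  link_jointly_mono theta phi m /\ link_units theta phi m /\
  bicartesian_span (m ∘ phi) (m ∘ theta) /\ link_composition theta phi m.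
End Conditions.

Section GroupoidToLink.
Context {C : Category}.
Variables (C0 C1 C2 : C) (d c : Hom C1 C0) (e : Hom C0 C1) (m pi1 pi2 : Hom C2 C1)
  (i : Hom C1 C1) (theta phi : Hom C2 C2).
Hypotheses (theta_invol : theta ∘ theta = idm C2) (phi_invol : phi ∘ phi = idm C2).
Hypotheses (d_e : d ∘ e = idm C0) (c_e : c ∘ e = idm C0)
  (d_m : d ∘ m = d ∘ pi2) (c_m : c ∘ m = c ∘ pi1) (i_e : i ∘ e = e)
  (pb : is_pullback pi1 pi2 d c).
Hypotheses (pi1_theta : pi1 ∘ theta = i ∘ pi1) (pi2_theta : pi2 ∘ theta = m)
  (pi1_phi : pi1 ∘ phi = m) (pi2_phi : pi2 ∘ phi = i ∘ pi2).
Variables (e1 e2 : Hom C1 C2).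
Hypotheses (pi1_e1 : pi1 ∘ e1 = idm C1) (pi2_e1 : pi2 ∘ e1 = e ∘ d)
  (pi1_e2 : pi1 ∘ e2 = e ∘ c) (pi2_e2 : pi2 ∘ e2 = idm C1)
  (m_e1 : m ∘ e1 = idm C1) (m_e2 : m ∘ e2 = idm C1).

Let pi_mono := pullback_jointly_mono pb.
Let pi_square : d ∘ pi1 = c ∘ pi2 := proj1 pb.

Lemma m_phi : m ∘ phi = pi1.
Proof. rewrite <- pi1_phi, <- comp_assoc, phi_invol, comp_id_r. reflexivity. Qed.

Lemma m_theta : m ∘ theta = pi2.
Proof. rewrite <- pi2_theta, <- comp_assoc, theta_invol, comp_id_r. reflexivity. Qed.

#[local] Hint Rewrite
  d_e (comp_rw d_e) c_e (comp_rw c_e) d_m (comp_rw d_m) c_m (comp_rw c_m)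
  i_e (comp_rw i_e) pi1_theta (comp_rw pi1_theta) pi2_theta (comp_rw pi2_theta)
  pi1_phi (comp_rw pi1_phi) pi2_phi (comp_rw pi2_phi)
  pi1_e1 (comp_rw pi1_e1) pi2_e1 (comp_rw pi2_e1) pi1_e2 (comp_rw pi1_e2)
  pi2_e2 (comp_rw pi2_e2) m_e1 (comp_rw m_e1) m_e2 (comp_rw m_e2)
  m_phi (comp_rw m_phi) m_theta (comp_rw m_theta)
  pi_square (comp_rw pi_square) : link.

Lemma groupoid_link_jointly_mono : link_jointly_mono theta phi m.
Proof.
  unfold link_jointly_mono. rewrite m_theta, m_phi.
  split; intros W x y mxy pixy.
  - apply (split_mono_cancel theta_invol), (split_mono_cancel phi_invol), pi_mono;
      comp_simpl; congruence.
  - apply (split_mono_cancel phi_invol), (split_mono_cancel theta_invol), pi_mono;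
      comp_simpl; congruence.
Qed.

Lemma theta_e2 : theta ∘ e2 = e2.
Proof. apply pi_mono; comp_simpl; reflexivity. Qed.

Lemma phi_e1 : phi ∘ e1 = e1.
Proof. apply pi_mono; comp_simpl; reflexivity. Qed.

Lemma groupoid_link_units : link_units theta phi m.
Proof.
  exists e1, e2.
  repeat split; try assumption; auto using theta_e2, phi_e1; comp_simpl; reflexivity.
Qed.

Lemma groupoid_bicartesian_span : bicartesian_span (m ∘ phi) (m ∘ theta).
Proof.
  rewrite m_phi, m_theta. exists C0, d, c.
  split; [exact pb|]. exact (pullback_of_split_epis_is_pushout e e d_e c_e pb).
Qed.

Variables (C3 : C) (q1 : Hom C3 C2) (q2 : Hom C3 C1).
Hypotheses (pb3 : is_pullback q1 q2 (d ∘ pi2) c)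
  (assoc : forall mx1 b onexm : Hom C3 C2,
     pi1 ∘ mx1 = m ∘ q1 -> pi2 ∘ mx1 = q2 ->
     pi1 ∘ b = pi2 ∘ q1 -> pi2 ∘ b = q2 ->
     pi1 ∘ onexm = pi1 ∘ q1 -> pi2 ∘ onexm = m ∘ b ->
     m ∘ onexm = m ∘ mx1).

Lemma groupoid_link_composition : link_composition theta phi m.
Proof.
  destruct (pullback_lift pb C3 (pi2 ∘ q1) q2) as [r [pi1_r pi2_r]].
  { rewrite comp_assoc. exact (proj1 pb3). }
  assert (pb_r : is_pullback q1 r pi2 pi1).
  { apply (pullback_pasting q1 r pi2 pb (eq_sym pi1_r)). rewrite pi2_r. exact pb3. }
  destruct (pullback_lift pb C3 (m ∘ q1) (pi2 ∘ r)) as [m1 [pi1_m1 pi2_m1]].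
  { rewrite pi2_r, (comp_rw d_m). exact (proj1 pb3). }
  destruct (pullback_lift pb C3 (pi1 ∘ q1) (m ∘ r)) as [m2 [pi1_m2 pi2_m2]].
  { rewrite (comp_rw pi_square), (comp_rw c_m), <- !comp_assoc, pi1_r. reflexivity. }
  exists C3, q1, r. rewrite m_theta, m_phi.
  split; [exact pb_r|].
  split; [exact (pullback_of_split_epis_is_pushout e2 e1 pi2_e2 pi1_e1 pb_r)|].
  exists m1, m2. repeat split; try assumption.
  symmetry. apply (assoc m1 r m2); congruence.
Qed.

Lemma groupoid_link_conditions_hold : groupoid_link_conditions theta phi m.
Proof.
  split; [|split; [|split]].
  - exact groupoid_link_jointly_mono.
  - exact groupoid_link_units.
  - exact groupoid_bicartesian_span.
  - exact groupoid_link_composition.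
Qed.
End GroupoidToLink.

Lemma link_conditions_of_groupoid {C : Category} {C1 C2 : C}
  (theta phi : Hom C2 C2) (m : Hom C2 C1) :
  theta ∘ theta = idm C2 -> phi ∘ phi = idm C2 ->
  arises_from_internal_groupoid theta phi m -> groupoid_link_conditions theta phi m.
Proof.
  intros theta_invol phi_invol
    [C0 [d [c [e [pi1 [pi2 [i [grpd [[pi1_theta pi2_theta] [pi1_phi pi2_phi]]]]]]]]]].
  destruct grpd as [d_e [c_e [d_m [c_m [_ [_ [_ [_ [i_e [pb [unit_r [unit_l
    [_ [_ [C3 [q1 [q2 [pb3 assoc]]]]]]]]]]]]]]]]]].
  destruct (pullback_lift pb C1 (idm C1) (e ∘ d)) as [e1 [pi1_e1 pi2_e1]].
  { rewrite comp_id_r, comp_assoc, c_e, comp_id_l. reflexivity. }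
  destruct (pullback_lift pb C1 (e ∘ c) (idm C1)) as [e2 [pi1_e2 pi2_e2]].
  { rewrite comp_id_r, comp_assoc, d_e, comp_id_l. reflexivity. }
  pose proof (unit_r e1 pi1_e1 pi2_e1) as m_e1.
  pose proof (unit_l e2 pi1_e2 pi2_e2) as m_e2.
  apply groupoid_link_conditions_hold with
    (d := d) (c := c) (e := e) (pi1 := pi1) (pi2 := pi2) (i := i)
    (e1 := e1) (e2 := e2) (q1 := q1) (q2 := q2); assumption.
Qed.

Section LinkToGroupoid.
Context {C : Category}.
Variables (C1 C2 : C) (theta phi : Hom C2 C2) (m pi1 pi2 : Hom C2 C1).
Hypotheses (theta_invol : theta ∘ theta = idm C2) (phi_invol : phi ∘ phi = idm C2)
  (m_phi : m ∘ phi = pi1) (m_theta : m ∘ theta = pi2)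
  (mono_pi2 : jointly_mono2 m pi2) (mono_pi1 : jointly_mono2 m pi1).
Variables (e1 e2 : Hom C1 C2).
Hypotheses (m_e1 : m ∘ e1 = idm C1) (m_e2 : m ∘ e2 = idm C1)
  (theta_e2 : theta ∘ e2 = e2) (phi_e1 : phi ∘ e1 = e1)
  (inverses_agree : pi2 ∘ (phi ∘ e2) = pi1 ∘ (theta ∘ e1))
  (source_unit_m : pi2 ∘ (e1 ∘ m) = pi2 ∘ (e1 ∘ pi2))
  (target_unit_m : pi1 ∘ (e2 ∘ m) = pi1 ∘ (e2 ∘ pi1)).
Variables (C0 : C) (d c : Hom C1 C0) (e : Hom C0 C1).
Hypotheses (pb : is_pullback pi1 pi2 d c) (po : is_pushout pi1 pi2 d c)
  (pi2_e1 : pi2 ∘ e1 = e ∘ d) (pi1_e2 : pi1 ∘ e2 = e ∘ c).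

Let pi_mono := pullback_jointly_mono pb.
Let pi_square : d ∘ pi1 = c ∘ pi2 := proj1 pb.
Definition inv : Hom C1 C1 := pi1 ∘ (theta ∘ e1).

Lemma pi1_theta_e1 : pi1 ∘ (theta ∘ e1) = inv.
Proof. reflexivity. Qed.

Lemma pi1_phi : pi1 ∘ phi = m.
Proof. rewrite <- m_phi, <- comp_assoc, phi_invol, comp_id_r. reflexivity. Qed.

Lemma pi2_theta : pi2 ∘ theta = m.
Proof. rewrite <- m_theta, <- comp_assoc, theta_invol, comp_id_r. reflexivity. Qed.

Lemma pi1_e1 : pi1 ∘ e1 = idm C1.
Proof. rewrite <- m_phi, <- comp_assoc, phi_e1. exact m_e1. Qed.

Lemma pi2_e2 : pi2 ∘ e2 = idm C1.
Proof. rewrite <- m_theta, <- comp_assoc, theta_e2. exact m_e2. Qed.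

#[local] Hint Rewrite m_phi (comp_rw m_phi) m_theta (comp_rw m_theta)
  pi1_phi (comp_rw pi1_phi) pi2_theta (comp_rw pi2_theta)
  m_e1 (comp_rw m_e1) m_e2 (comp_rw m_e2) pi1_e1 (comp_rw pi1_e1)
  pi2_e2 (comp_rw pi2_e2) pi2_e1 (comp_rw pi2_e1) pi1_e2 (comp_rw pi1_e2)
  inverses_agree (comp_rw3 inverses_agree) pi1_theta_e1 (comp_rw3 pi1_theta_e1)
  : link.

Lemma c_e_d : c ∘ (e ∘ d) = d.
Proof.
  rewrite <- pi2_e1, comp_assoc, <- pi_square, <- comp_assoc, pi1_e1, comp_id_r.
  reflexivity.
Qed.

Lemma d_e_c : d ∘ (e ∘ c) = c.
Proof.
  rewrite <- pi1_e2, comp_assoc, pi_square, <- comp_assoc, pi2_e2, comp_id_r.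
  reflexivity.
Qed.

(* Evaluating the unit conditions at [e1] and [e2] shows that [e d] and [e c]
   are idempotent; composing with [c] and [d] gives [d e d = d], [c e c = c]. *)
Lemma d_e_d : d ∘ (e ∘ d) = d.
Proof.
  pose proof (eq_comp_r source_unit_m _ e1) as idem. comp_simpl in idem.
  apply (f_equal (comp c)) in idem. rewrite (comp_rw3 c_e_d), c_e_d in idem.
  symmetry. exact idem.
Qed.

Lemma c_e_c : c ∘ (e ∘ c) = c.
Proof.
  pose proof (eq_comp_r target_unit_m _ e2) as idem. comp_simpl in idem.
  apply (f_equal (comp d)) in idem. rewrite (comp_rw3 d_e_c), d_e_c in idem.
  symmetry. exact idem.
Qed.

Lemma d_e : d ∘ e = idm C0.
Proof.
  apply (pushout_jointly_epi po); rewrite <- comp_assoc, comp_id_l.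
  - exact d_e_d.
  - exact d_e_c.
Qed.

Lemma c_e : c ∘ e = idm C0.
Proof.
  apply (pushout_jointly_epi po); rewrite <- comp_assoc, comp_id_l.
  - exact c_e_d.
  - exact c_e_c.
Qed.

Lemma d_m : d ∘ m = d ∘ pi2.
Proof.
  apply (split_mono_cancel d_e). pose proof source_unit_m as unit_m.
  comp_simpl in unit_m. exact unit_m.
Qed.

Lemma c_m : c ∘ m = c ∘ pi1.
Proof.
  apply (split_mono_cancel c_e). pose proof target_unit_m as unit_m.
  comp_simpl in unit_m. exact unit_m.
Qed.

Lemma d_inv : d ∘ inv = c.
Proof. rewrite <- pi1_theta_e1, comp_assoc, pi_square. comp_simpl. reflexivity. Qed.

Lemma c_inv : c ∘ inv = d.
Proof.
  rewrite <- pi1_theta_e1, <- inverses_agree, comp_assoc, <- pi_square.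
  comp_simpl. reflexivity.
Qed.

#[local] Hint Rewrite d_e (comp_rw d_e) c_e (comp_rw c_e) d_inv (comp_rw d_inv)
  c_inv (comp_rw c_inv) : link.

Lemma inv_e : inv ∘ e = e.
Proof.
  assert (theta_e1_e : theta ∘ (e1 ∘ e) = e1 ∘ e)
    by (apply mono_pi2; comp_simpl; reflexivity).
  unfold inv. rewrite <- !comp_assoc, theta_e1_e. comp_simpl. reflexivity.
Qed.

Lemma inv_inv : inv ∘ inv = idm C1.
Proof.
  assert (theta_e1_i : theta ∘ (e1 ∘ inv) = phi ∘ e2)
    by (apply mono_pi2; comp_simpl; reflexivity).
  unfold inv at 1. rewrite <- !comp_assoc, theta_e1_i. comp_simpl.
  reflexivity.
Qed.

Lemma unit_right (u : Hom C1 C2) :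
  pi1 ∘ u = idm C1 -> pi2 ∘ u = e ∘ d -> m ∘ u = idm C1.
Proof.
  intros pi1_u pi2_u. replace u with e1; [exact m_e1|].
  apply pi_mono; [rewrite pi1_u | rewrite pi2_u]; comp_simpl; reflexivity.
Qed.

Lemma unit_left (u : Hom C1 C2) :
  pi1 ∘ u = e ∘ c -> pi2 ∘ u = idm C1 -> m ∘ u = idm C1.
Proof.
  intros pi1_u pi2_u. replace u with e2; [exact m_e2|].
  apply pi_mono; [rewrite pi1_u | rewrite pi2_u]; comp_simpl; reflexivity.
Qed.

Lemma inverse_right (u : Hom C1 C2) :
  pi1 ∘ u = idm C1 -> pi2 ∘ u = inv -> m ∘ u = e ∘ c.
Proof.
  intros pi1_u pi2_u. replace u with (phi ∘ e2); [comp_simpl; reflexivity|].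
  apply pi_mono; [rewrite pi1_u | rewrite pi2_u]; comp_simpl; reflexivity.
Qed.

Lemma inverse_left (u : Hom C1 C2) :
  pi1 ∘ u = inv -> pi2 ∘ u = idm C1 -> m ∘ u = e ∘ d.
Proof.
  intros pi1_u pi2_u. replace u with (theta ∘ e1); [comp_simpl; reflexivity|].
  apply pi_mono; [rewrite pi1_u | rewrite pi2_u]; comp_simpl; reflexivity.
Qed.

Variables (C3 : C) (p1 p2 m1 m2 : Hom C3 C2).
Hypotheses (pb3 : is_pullback p1 p2 pi2 pi1)
  (pi1_m1 : pi1 ∘ m1 = m ∘ p1) (pi2_m1 : pi2 ∘ m1 = pi2 ∘ p2)
  (pi1_m2 : pi1 ∘ m2 = pi1 ∘ p1) (pi2_m2 : pi2 ∘ m2 = m ∘ p2)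
  (m_m1_m2 : m ∘ m1 = m ∘ m2).

#[local] Hint Rewrite pi1_m1 (comp_rw pi1_m1) pi2_m1 (comp_rw pi2_m1)
  pi1_m2 (comp_rw pi1_m2) pi2_m2 (comp_rw pi2_m2) : link.

Lemma composable_pullback : is_pullback p1 (pi2 ∘ p2) (d ∘ pi2) c.
Proof. exact (proj1 (pullback_pasting p1 p2 pi2 pb (proj1 pb3)) pb3). Qed.

Lemma m_assoc (mx1 b onexm : Hom C3 C2) :
  pi1 ∘ mx1 = m ∘ p1 -> pi2 ∘ mx1 = pi2 ∘ p2 ->
  pi1 ∘ b = pi2 ∘ p1 -> pi2 ∘ b = pi2 ∘ p2 ->
  pi1 ∘ onexm = pi1 ∘ p1 -> pi2 ∘ onexm = m ∘ b ->
  m ∘ onexm = m ∘ mx1.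
Proof.
  intros pi1_mx1 pi2_mx1 pi1_b pi2_b pi1_onexm pi2_onexm.
  pose proof (proj1 pb3) as p_square.
  assert (b = p2) as -> by (apply pi_mono; congruence).
  replace mx1 with m1 by (apply pi_mono; congruence).
  replace onexm with m2 by (apply pi_mono; congruence).
  symmetry. exact m_m1_m2.
Qed.

Lemma m_pairing_inv_pi1_m (x : Hom C2 C2) :
  pi1 ∘ x = inv ∘ pi1 -> pi2 ∘ x = m -> m ∘ x = pi2.
Proof.
  intros pi1_x pi2_x.
  destruct (pullback_lift pb3 C2 (theta ∘ (e1 ∘ pi1)) (idm C2)) as [y [p1_y p2_y]].
  { comp_simpl. reflexivity. }
  assert (m1_y : m1 ∘ y = e2 ∘ pi2).
  { apply pi_mono; comp_simpl; rewrite ?p1_y, ?p2_y; comp_simpl.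
    - rewrite pi_square. reflexivity.
    - reflexivity. }
  assert (m2_y : m2 ∘ y = x)
    by (apply pi_mono; comp_simpl; rewrite ?p1_y, ?p2_y; comp_simpl; congruence).
  rewrite <- m2_y, comp_assoc, <- m_m1_m2, <- comp_assoc, m1_y. comp_simpl.
  reflexivity.
Qed.

Lemma m_pairing_m_inv_pi2 (x : Hom C2 C2) :
  pi1 ∘ x = m -> pi2 ∘ x = inv ∘ pi2 -> m ∘ x = pi1.
Proof.
  intros pi1_x pi2_x.
  destruct (pullback_lift pb3 C2 (idm C2) (phi ∘ (e2 ∘ pi2))) as [y [p1_y p2_y]].
  { comp_simpl. reflexivity. }
  assert (m2_y : m2 ∘ y = e1 ∘ pi1).
  { apply pi_mono; comp_simpl; rewrite ?p1_y, ?p2_y; comp_simpl.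
    - reflexivity.
    - rewrite pi_square. reflexivity. }
  assert (m1_y : m1 ∘ y = x)
    by (apply pi_mono; comp_simpl; rewrite ?p1_y, ?p2_y; comp_simpl; congruence).
  rewrite <- m1_y, comp_assoc, m_m1_m2, <- comp_assoc, m2_y. comp_simpl.
  reflexivity.
Qed.

Lemma pi1_theta : pi1 ∘ theta = inv ∘ pi1.
Proof.
  destruct (pullback_lift pb C2 (inv ∘ pi1) m) as [x [pi1_x pi2_x]].
  { rewrite comp_assoc, d_inv, c_m. reflexivity. }
  replace theta with x; [exact pi1_x|].
  apply mono_pi2.
  - rewrite (m_pairing_inv_pi1_m x pi1_x pi2_x). comp_simpl. reflexivity.
  - rewrite pi2_x. comp_simpl. reflexivity.
Qed.

Lemma pi2_phi : pi2 ∘ phi = inv ∘ pi2.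
Proof.
  destruct (pullback_lift pb C2 m (inv ∘ pi2)) as [x [pi1_x pi2_x]].
  { rewrite d_m, comp_assoc, c_inv. reflexivity. }
  replace phi with x; [exact pi2_x|].
  apply mono_pi1.
  - rewrite (m_pairing_m_inv_pi2 x pi1_x pi2_x). comp_simpl. reflexivity.
  - rewrite pi1_x. comp_simpl. reflexivity.
Qed.

Lemma arises_from_groupoid_of_link_data : arises_from_internal_groupoid theta phi m.
Proof.
  exists C0, d, c, e, pi1, pi2, inv.
  split; [|split; split; auto using pi1_theta, pi2_theta, pi1_phi, pi2_phi].
  repeat (split; [solve [auto using d_e, c_e, d_m, c_m, d_inv, c_inv, inv_inv, inv_e,
    unit_right, unit_left, inverse_right, inverse_left]|]).
  exists C3, p1, (pi2 ∘ p2). split; [exact composable_pullback|].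
  intros mx1 b onexm. apply m_assoc.
Qed.

End LinkToGroupoid.

Lemma groupoid_of_link_conditions {C : Category} {C1 C2 : C}
  (theta phi : Hom C2 C2) (m : Hom C2 C1) :
  theta ∘ theta = idm C2 -> phi ∘ phi = idm C2 ->
  groupoid_link_conditions theta phi m -> arises_from_internal_groupoid theta phi m.
Proof.
  intros theta_invol phi_invol [[mono_pi2 mono_pi1] [units [span composition]]].
  destruct units as [e1 [e2 [m_e1 [m_e2 [theta_e2 [phi_e1
    [inverses_agree [units_agree [source_unit_m target_unit_m]]]]]]]]].
  destruct span as [C0 [d [c [pb po]]]].
  destruct composition as [C3 [p1 [p2 [pb3 [_ [m1 [m2
    [pi1_m1 [pi2_m1 [pi1_m2 [pi2_m2 m_m1_m2]]]]]]]]]]].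
  destruct (pushout_desc po C1 (m ∘ theta ∘ e1) (m ∘ phi ∘ e2)) as [e [e_d e_c]].
  { autorewrite with comp in units_agree |- *. exact units_agree. }
  apply arises_from_groupoid_of_link_data with (pi1 := m ∘ phi) (pi2 := m ∘ theta)
    (e1 := e1) (e2 := e2) (d := d) (c := c) (e := e) (p1 := p1) (p2 := p2)
    (m1 := m1) (m2 := m2); try assumption.
  all: autorewrite with comp in *; auto.
Qed.

Theorem theorem5p3 (C : Category) (C1 C2 : C)
  (theta phi : Hom C2 C2) (m : Hom C2 C1) :
  involutive_2_link theta phi m ->
  (arises_from_internal_groupoid theta phi m <->
   (* (1) *)
   (jointly_mono2 m (m ∘ theta) /\ jointly_mono2 m (m ∘ phi)) /\
   (* (2) *)
   (exists e1 e2 : Hom C1 C2,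
      m ∘ e1 = idm C1 /\ m ∘ e2 = idm C1 /\
      theta ∘ e2 = e2 /\ phi ∘ e1 = e1 /\
      m ∘ theta ∘ phi ∘ e2 = m ∘ phi ∘ theta ∘ e1 /\
      m ∘ theta ∘ e1 ∘ m ∘ phi = m ∘ phi ∘ e2 ∘ m ∘ theta /\
      m ∘ theta ∘ e1 ∘ m = m ∘ theta ∘ e1 ∘ m ∘ theta /\
      m ∘ phi ∘ e2 ∘ m = m ∘ phi ∘ e2 ∘ m ∘ phi) /\
   (* (3) with pi1 = m phi, pi2 = m theta: (pi1, pi2) is bi-exact *)
   (exists (C0 : C) (d c : Hom C1 C0),
      is_pullback (m ∘ phi) (m ∘ theta) d c /\
      is_pushout (m ∘ phi) (m ∘ theta) d c) /\
   (exists (C3 : C) (p1 p2 : Hom C3 C2),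
      is_pullback p1 p2 (m ∘ theta) (m ∘ phi) /\
      is_pushout p1 p2 (m ∘ theta) (m ∘ phi) /\
      (* (4) *)
      exists m1 m2 : Hom C3 C2,
        m ∘ phi ∘ m1 = m ∘ p1 /\ m ∘ theta ∘ m1 = m ∘ theta ∘ p2 /\
        m ∘ phi ∘ m2 = m ∘ phi ∘ p1 /\ m ∘ theta ∘ m2 = m ∘ p2 /\
        m ∘ m1 = m ∘ m2)).
Proof.
  intros [theta_invol [phi_invol _]]. split.
  - exact (link_conditions_of_groupoid theta phi m theta_invol phi_invol).
  - exact (groupoid_of_link_conditions theta phi m theta_invol phi_invol).
Qed.
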